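(* Let $\rho_1,\rho_2$ be finite nonempty sets of integers greater than $1$, each consisting of pairwise coprime elements. If $Q_{\rho_1}(x)=Q_{\rho_2}(x)$, then $\rho_1=\rho_2$.
   Context: For a finite nonempty set $\rho=\{r_1,\dots,r_s\}$ of integers with $r_i>1$ and $\gcd(r_i,r_j)=1$ for $i\ne j$, put $n_0=\prod_i r_i$ and define the inclusion-exclusion polynomial $$Q_\rho(x)=\prod_{I\subseteq\{1,\dots,s\}}\left(x^{n_0/\prod_{i\in I}r_i}-1\right)^{(-1)^{|I|}},$$ i.e. $Q_\rho(x)=\frac{(x^{n_0}-1)\prod_{i<j}(x^{n_{ij}}-1)\cdots}{\prod_i(x^{n_i}-1)\prod_{i<j<k}(x^{n_{ijk}}-1)\cdots}$ with $n_i=n_0/r_i$, $n_{ij}=n_0/(r_ir_j)$, etc.; it is a polynomial with integer coefficients. *)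

From HB Require Import structures.
From mathcomp Require Import all_boot all_order all_algebra.
Unset Printing Implicit Defensive.
Import GRing.Theory.
Local Open Scope ring_scope.

(* A finite set rho = {r_1,...,r_s} of integers is represented by a
   duplicate-free sequence s of naturals (the r_i > 1 are positive). *)

Definition ie_n0 (s : seq nat) : nat := (\prod_(r <- s) r)%N.

Definition ie_dI (s : seq nat) (I : {set 'I_(size s)}) : nat :=
  (\prod_(i in I) nth 0%N s i)%N.

Definition ie_factor (s : seq nat) (I : {set 'I_(size s)}) : {poly rat} :=
  'X^(ie_n0 s %/ ie_dI s I) - 1.

(* factors with exponent (-1)^|I| = +1 *)
Definition ie_num (s : seq nat) : {poly rat} :=
  \prod_(I : {set 'I_(size s)} | ~~ odd #|I|) ie_factor s I.

(* factors with exponent (-1)^|I| = -1 *)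
Definition ie_den (s : seq nat) : {poly rat} :=
  \prod_(I : {set 'I_(size s)} | odd #|I|) ie_factor s I.

(* Inclusion-exclusion polynomial Q_rho = num / den (the division is exact). *)
Definition Qrho (s : seq nat) : {poly rat} := ie_num s %/ ie_den s.

Definition ie_admissible (s : seq nat) : bool :=
  [&& s != [::], uniq s, all (fun r => 1 < r)%N s &
      pairwise coprime s].

From HB Require Import structures.
From mathcomp Require Import all_boot all_order all_algebra.
From mathcomp Require Import cyclotomic ring.

(** Write [d_I] for the product of the [r_i], [i] in [I], and [e_I = n_0 / d_I];
   then [Q_rho] is the quotient of the product of the [x^e_I - 1] over the
   even [I] by the product over the odd [I].  The division is exact: [Phi_d]
   occurs in [x^e_I - 1] iff [I] only contains indices with [r_i | n_0 / d],
   and such a set of indices has at least as many even as odd subsets.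
   A product of binomials [x^e - 1] determines the multiset of its exponents
   (compare the constant coefficient and the coefficient of the least
   exponent), so [Q_rho1 = Q_rho2] equates the exponent multisets of the
   cross-multiplied products; as [I |-> e_I] is injective and the parities do
   not mix, every [e_I] of [rho1] is an [e_J] of [rho2] and conversely.  The
   largest exponent, [n_0] itself ([I] empty), is then common, so each [r_i] of [rho1] equals
   some [d_J] of [rho2], hence has a divisor in [rho2], and vice versa;
   pairwise coprimality turns these divisibilities into equalities. *)

Set Implicit Arguments.
Unset Strict Implicit.

Import GRing.Theory Num.Theory.

Lemma coprime_prodr (I : Type) (r : seq I) (P : pred I) (F : I -> nat) a :
  (forall i, P i -> coprime a (F i)) -> coprime a (\prod_(i <- r | P i) F i).
Proof.
move=> aF; elim/big_ind: _ => [|x y|//]; first exact: coprimen1.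
by rewrite coprimeMr => -> ->.
Qed.

Lemma dvdn_prod_coprime (I : eqType) (r : seq I) (F : I -> nat) m :
  uniq r -> {in r &, forall i j, i != j -> coprime (F i) (F j)} ->
  {in r, forall i, F i %| m} -> \prod_(i <- r) F i %| m.
Proof.
elim: r => [|i r IHr] /=; first by rewrite big_nil dvd1n.
case/andP=> ir ur copF dvdF; rewrite big_cons Gauss_dvd ?dvdF ?mem_head //=.
- apply: IHr => // [j k jr kr|j jr]; first by apply: copF; rewrite inE ?jr ?kr orbT.
  by apply: dvdF; rewrite inE jr orbT.
- rewrite big_seq; apply: coprime_prodr => j jr.
  by apply: copF; rewrite ?inE ?eqxx ?jr ?orbT //; apply: contraNneq ir => ->.
Qed.

Lemma divn_inj n x y :
  0 < n -> x %| n -> y %| n -> n %/ x = n %/ y -> x = y.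
Proof.
move=> n_gt0 xn yn exy.
have divn_divK d : d %| n -> n %/ (n %/ d) = d by move=> dn; rewrite divnA // mulKn.
by rewrite -(divn_divK x) // exy divn_divK.
Qed.

Lemma card_odd_subsets_le (T : finType) (A : {set T}) :
  #|[set I : {set T} | odd #|I| & I \subset A]| <=
  #|[set I : {set T} | ~~ odd #|I| & I \subset A]|.
Proof.
have [->|[j jA]] := set_0Vmem A.
  rewrite (_ : [set I | _ & _] = set0) ?cards0 //.
  by apply/setP => I; rewrite !inE subset0; case: eqP => [->|]; rewrite ?cards0 ?andbF.
pose toggle (I : {set T}) := if j \in I then I :\ j else j |: I.
have toggleK : involutive toggle.
  move=> I; rewrite /toggle; case: (boolP (j \in I)) => jI.
    by rewrite setD11 setD1K.
  by rewrite setU11 setU1K.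
rewrite -(card_imset _ (inv_inj toggleK)); apply/subset_leq_card/subsetP.
move=> _ /imsetP[I + ->]; rewrite !inE /toggle => /andP[oddI sIA]; case: ifP => jI.
  by rewrite (cardsD1 j I) jI /= in oddI; rewrite oddI (subset_trans (subD1set _ _)).
by rewrite cardsU1 jI /= oddI subUset sub1set jA.
Qed.

Section BinomialProducts.

Variable R : numDomainType.
Local Open Scope ring_scope.

Local Notation binprod A := (\prod_(a <- A) ('X^a - 1) : {poly R}).

Lemma coef0_prod_XnsubC (A : seq nat) :
  0%N \notin A -> (binprod A)`_0 = (-1) ^+ size A.
Proof.
elim: A => [|a A IHA]; first by rewrite big_nil coef1.
rewrite inE negb_or => /andP[a_neq0 /IHA IH].
by rewrite big_cons coef0M IH coefB coefXn coef1 (negbTE a_neq0) sub0r exprS.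
Qed.

Lemma coef_prod_XnsubC (A : seq nat) m : (0 < m)%N -> all (leq m) A ->
  (binprod A)`_m = (-1) ^+ size A * - (count_mem m A)%:R.
Proof.
move=> m_gt0; elim: A => [|a A IHA] /=.
  by rewrite big_nil coef1 (gtn_eqF m_gt0) mul1r oppr0.
case/andP=> m_le_a mA; have A_neq0 : 0%N \notin A.
  by apply/negP => /(allP mA); rewrite leqn0 => /eqP m0; rewrite m0 in m_gt0.
rewrite big_cons mulrBl mul1r coefB coefXnM IHA // exprS natrD.
case: ltngtP m_le_a => // [m_lt_a|<-] _ /=; first by rewrite add0r; ring.
by rewrite subnn coef0_prod_XnsubC //; ring.
Qed.

Lemma prod_XnsubC_common (A B : seq nat) : 0%N \notin A ++ B ->
  A ++ B != [::] -> binprod A = binprod B -> exists2 m, m \in A & m \in B.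
Proof.
move=> AB0 AB_neq0 eAB.
have /ex_minnP[m mAB m_min] : exists x, x \in A ++ B.
  by case: (A ++ B) AB_neq0 => // x t _; exists x; apply: mem_head.
have m_gt0 : (0 < m)%N by rewrite lt0n; apply: contraNneq AB0 => <-.
have [A_ge_m B_ge_m] : all (leq m) A /\ all (leq m) B.
  by split; apply/allP => x x_in; apply: m_min; rewrite mem_cat x_in ?orbT.
move: AB0; rewrite mem_cat negb_or => /andP[A0 B0].
have sign_eq := congr1 (fun p : {poly R} => p`_0) eAB.
rewrite /= !coef0_prod_XnsubC // in sign_eq.
have /eqP := congr1 (fun p : {poly R} => p`_m) eAB.
rewrite /= !coef_prod_XnsubC // sign_eq (inj_eq (mulfI _)) ?signr_eq0 //.
rewrite eqr_opp eqr_nat => /eqP count_eq.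
move: mAB; rewrite mem_cat -!has_pred1 !has_count count_eq orbb => m_in_B.
by exists m; rewrite -has_pred1 has_count ?count_eq.
Qed.

Lemma prod_XnsubC_inj (A B : seq nat) : 0%N \notin A ++ B ->
  binprod A = binprod B -> perm_eq A B.
Proof.
elim: {A}(size A).+1 {-2}A (ltnSn (size A)) B => // n IHn A sizeA B AB0 eAB.
have [AB_nil|AB_neq0] := eqVneq (A ++ B) [::].
  move/eqP: AB_nil; rewrite -size_eq0 size_cat addn_eq0 !size_eq0.
  by case/andP=> /eqP-> /eqP->.
have [m mA mB] := prod_XnsubC_common AB0 AB_neq0 eAB.
rewrite (permPl (perm_to_rem mA)) (permPr (perm_to_rem mB)) perm_cons.
have m_gt0 : (0 < m)%N by rewrite lt0n; apply: contraNneq AB0 => <-; rewrite mem_cat mA.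
apply: IHn.
- by move: sizeA; rewrite (perm_size (perm_to_rem mA)).
- by apply: contra AB0; rewrite !mem_cat => /orP[/mem_rem ->|/mem_rem ->]; rewrite ?orbT.
- have Xm_neq0 : 'X^m - 1 != 0 :> {poly R} by rewrite -size_poly_eq0 size_XnsubC.
  apply: (mulfI Xm_neq0); move: eAB.
  by rewrite (perm_big _ (perm_to_rem mA)) (perm_big _ (perm_to_rem mB)) !big_cons.
Qed.

End BinomialProducts.

Section Cyclotomic.

Variable R : comNzRingType.
Local Open Scope ring_scope.

Local Notation cyc d := (map_poly (intr : int -> R) 'Phi_d).

Lemma XnsubC_prod_cyclotomic n e : (0 < n)%N -> (e %| n)%N ->
  'X^e - 1 = \prod_(d <- divisors n) cyc d ^+ (d %| e).
Proof.
move=> n_gt0 en; have e_gt0 := dvdn_gt0 n_gt0 en.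
have := congr1 (map_poly (intr : int -> R)) (prod_Cyclotomic e_gt0).
rewrite rmorphB rmorph1 /= map_polyXn rmorph_prod => <-.
rewrite (eq_bigr (fun d => if (d %| e)%N then cyc d else 1)); last first.
  by move=> d _; case: (d %| e)%N.
rewrite -big_mkcond /= -[RHS]big_filter; apply: perm_big; apply: uniq_perm.
- exact: divisors_uniq.
- by rewrite filter_uniq // divisors_uniq.
move=> d; rewrite mem_filter -!dvdn_divisors //.
by apply/idP/andP => [de|[]//]; split=> //; apply: dvdn_trans en.
Qed.

End Cyclotomic.

Definition ie_exp (s : seq nat) (I : {set 'I_(size s)}) : nat :=
  ie_n0 s %/ ie_dI s I.
Arguments ie_exp : clear implicits.

Definition ie_exps (s : seq nat) (b : bool) : seq nat :=
  map (ie_exp s) (enum (fun I : {set 'I_(size s)} => odd #|I| == b)).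

Lemma ie_exp_set0 (s : seq nat) : ie_exp s set0 = ie_n0 s.
Proof. by rewrite /ie_exp /ie_dI big_set0 divn1. Qed.

Section Admissible.

Variable s : seq nat.
Hypothesis adm : ie_admissible s.

Local Notation r i := (nth 0 s i).

Lemma ie_r_gt1 (i : 'I_(size s)) : 1 < r i.
Proof. by case/and4P: adm => _ _ /(all_nthP 0) + _; apply. Qed.

Lemma ie_r_coprime (i j : 'I_(size s)) : i != j -> coprime (r i) (r j).
Proof.
case/and4P: adm => _ _ _ /(pairwiseP 0) cop ij.
have [lt|lt|/val_inj eij] := ltngtP i j; last by rewrite eij eqxx in ij.
- by apply: cop; rewrite ?inE.
- by rewrite coprime_sym; apply: cop; rewrite ?inE.
Qed.

Lemma ie_dI_dvdP (I : {set 'I_(size s)}) m :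
  (ie_dI s I %| m) = (I \subset [set i : 'I_(size s) | r i %| m]).
Proof.
apply/idP/subsetP => [dIm i iI|rm].
  by rewrite inE; apply: dvdn_trans dIm; rewrite /ie_dI (bigD1 i) ?dvdn_mulr.
rewrite /ie_dI -big_enum; apply: dvdn_prod_coprime; first exact: enum_uniq.
  by move=> i j _ _; apply: ie_r_coprime.
by move=> i; rewrite mem_enum => /rm; rewrite inE.
Qed.

Lemma ie_dI_coprime (I : {set 'I_(size s)}) i :
  i \notin I -> coprime (r i) (ie_dI s I).
Proof.
move=> iI; apply: coprime_prodr => j jI.
by apply: ie_r_coprime; apply: contraNneq iI => ->.
Qed.

Lemma ie_dI_dvd_n0 (I : {set 'I_(size s)}) : ie_dI s I %| ie_n0 s.
Proof.
by rewrite /ie_n0 (big_nth 0) big_mkord (bigID (mem I)) dvdn_mulr.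
Qed.

Lemma ie_n0_gt0 : 0 < ie_n0 s.
Proof.
rewrite /ie_n0 big_seq; apply: prodn_cond_gt0 => x /(nthP 0) [i lti <-].
exact: ltnW (ie_r_gt1 (Ordinal lti)).
Qed.

Lemma ie_r_dvd_dI (I : {set 'I_(size s)}) i : i \in I -> r i %| ie_dI s I.
Proof. by move=> iI; rewrite /ie_dI (bigD1 i) ?dvdn_mulr. Qed.

Lemma ie_dI_inj : injective (ie_dI s).
Proof.
suff sub I J : ie_dI s I = ie_dI s J -> I \subset J.
  by move=> I J eIJ; apply/eqP; rewrite eqEsubset !sub.
move=> eIJ; apply/subsetP => i iI; apply: contraTT (ie_r_gt1 i) => /ie_dI_coprime.
by rewrite /coprime -eIJ (gcdn_idPl (ie_r_dvd_dI iI)) => /eqP ->.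
Qed.

Lemma ie_exp_inj : injective (ie_exp s).
Proof.
move=> I J eIJ; apply: ie_dI_inj.
by apply: divn_inj eIJ; [exact: ie_n0_gt0 | exact: ie_dI_dvd_n0 ..].
Qed.

Lemma ie_exp_gt0 (I : {set 'I_(size s)}) : 0 < ie_exp s I.
Proof.
by have := ie_n0_gt0; rewrite -(divnK (ie_dI_dvd_n0 I)) muln_gt0 => /andP[].
Qed.

Lemma ie_dvdn_mem_eq x y : x \in s -> y \in s -> x %| y -> x = y.
Proof.
move=> /(nthP 0) [i lti <-] /(nthP 0) [j ltj <-] rij.
have [eij|nij] := eqVneq (Ordinal lti) (Ordinal ltj); first by case: eij => ->.
have := ie_r_coprime nij; rewrite /coprime /= (gcdn_idPl rij) => /eqP ri1.
by have := ie_r_gt1 (Ordinal lti); rewrite /= ri1.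
Qed.

Local Open Scope ring_scope.

Local Notation cyc d := (map_poly (intr : int -> rat) 'Phi_d).

Lemma ie_prod_exps (b : bool) :
  \prod_(a <- ie_exps s b) ('X^a - 1) =
  \prod_(I : {set 'I_(size s)} | odd #|I| == b) ie_factor s I.
Proof. by rewrite big_map big_enum. Qed.

Lemma ie_num_exps : ie_num s = \prod_(a <- ie_exps s false) ('X^a - 1).
Proof. by rewrite ie_prod_exps; apply: eq_bigl => I; rewrite eqbF_neg. Qed.

Lemma ie_den_exps : ie_den s = \prod_(a <- ie_exps s true) ('X^a - 1).
Proof. by rewrite ie_prod_exps; apply: eq_bigl => I; rewrite eqb_id. Qed.

Lemma mem_ie_exps b (I : {set 'I_(size s)}) :
  (ie_exp s I \in ie_exps s b) = (odd #|I| == b).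
Proof. by rewrite mem_map ?mem_enum //; apply: ie_exp_inj. Qed.

Lemma ie_exps_neq0 b : 0%N \notin ie_exps s b.
Proof. by apply/mapP => -[I _ eI]; have := ie_exp_gt0 I; rewrite -eI. Qed.

Lemma dvdn_ie_exp d (I : {set 'I_(size s)}) : (d %| ie_n0 s)%N ->
  (d %| ie_exp s I)%N = (ie_dI s I %| ie_n0 s %/ d)%N.
Proof.
by move=> dn0; rewrite /ie_exp dvdn_divRL ?ie_dI_dvd_n0 // mulnC -dvdn_divRL.
Qed.

Lemma ie_factor_prod (P : pred {set 'I_(size s)}) :
  \prod_(I | P I) ie_factor s I =
  \prod_(d <- divisors (ie_n0 s))
    cyc d ^+ #|[set I | P I &
                        I \subset [set i : 'I_(size s) | (r i %| ie_n0 s %/ d)%N]]|.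
Proof.
rewrite (eq_bigr (fun I => \prod_(d <- divisors (ie_n0 s)) cyc d ^+ (d %| ie_exp s I)%N)).
  rewrite exchange_big big_seq [RHS]big_seq; apply: eq_bigr => d.
  rewrite -dvdn_divisors ?ie_n0_gt0 // => dn0; rewrite prodrXr -sum1dep_card big_mkcondr.
  by congr (_ ^+ _); apply: eq_bigr => I _; rewrite dvdn_ie_exp // ie_dI_dvdP //; case: ifP.
move=> I _; apply: XnsubC_prod_cyclotomic ie_n0_gt0 _.
exact: dvdn_div (ie_dI_dvd_n0 I).
Qed.

Lemma ie_den_dvd_num : ie_den s %| ie_num s.
Proof.
rewrite /ie_den /ie_num !ie_factor_prod.
elim/big_ind2: _ => [|p1 q1 p2 q2|d _]; [exact: dvdpp | exact: dvdp_mul |].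
exact/dvdp_exp2l/card_odd_subsets_le.
Qed.

End Admissible.

Section TwoSets.

Variables s1 s2 : seq nat.
Hypotheses (adm1 : ie_admissible s1) (adm2 : ie_admissible s2).

Definition ie_exp_covered :=
  forall I : {set 'I_(size s1)}, exists J : {set 'I_(size s2)}, ie_exp s2 J = ie_exp s1 I.

Lemma ie_exps_perm : Qrho s1 = Qrho s2 ->
  perm_eq (ie_exps s1 false ++ ie_exps s2 true) (ie_exps s2 false ++ ie_exps s1 true).
Proof.
move=> eQ; apply: (@prod_XnsubC_inj rat).
  by rewrite !mem_cat !(negbTE (ie_exps_neq0 adm1 _)) !(negbTE (ie_exps_neq0 adm2 _)).
rewrite !big_cat -!ie_num_exps -!ie_den_exps.
rewrite -(divpK (ie_den_dvd_num adm1)) -(divpK (ie_den_dvd_num adm2)).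
by rewrite -/(Qrho s1) -/(Qrho s2) eQ /= mulrAC.
Qed.

Lemma ie_exp_cover : Qrho s1 = Qrho s2 -> ie_exp_covered.
Proof.
move=> /ie_exps_perm perm12 I.
suff : ie_exp s1 I \in ie_exps s2 false ++ ie_exps s2 true.
  by rewrite mem_cat => /orP[]/mapP[J _ ->]; exists J.
have := perm_mem perm12 (ie_exp s1 I); rewrite !mem_cat !mem_ie_exps //.
by case: (odd #|I|) => /=; rewrite ?orbT ?orbF; [move=> -> | move=> <-]; rewrite ?orbT.
Qed.

Lemma ie_n0_le : ie_exp_covered -> ie_n0 s1 <= ie_n0 s2.
Proof. by move=> /(_ set0)[J]; rewrite ie_exp_set0 => <-; apply: leq_div. Qed.

Lemma ie_mem_has_divisor : ie_n0 s1 = ie_n0 s2 -> ie_exp_covered ->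
  forall x, x \in s1 -> exists2 y, y \in s2 & y %| x.
Proof.
move=> n0_eq cover _ /(nthP 0)[i lti <-].
have [J eJ] := cover [set Ordinal lti].
have ri_eq : nth 0 s1 i = ie_dI s2 J.
  have <- : ie_dI s1 [set Ordinal lti] = nth 0 s1 i by rewrite /ie_dI big_set1.
  apply: (divn_inj (ie_n0_gt0 adm2)); last by move: eJ; rewrite /ie_exp n0_eq => ->.
  - by rewrite -n0_eq ie_dI_dvd_n0.
  - exact: ie_dI_dvd_n0.
have [J0|[j jJ]] := set_0Vmem J.
  by have := ie_r_gt1 adm1 (Ordinal lti); rewrite /= ri_eq J0 /ie_dI big_set0.
by exists (nth 0 s2 j); rewrite ?mem_nth // ri_eq ie_r_dvd_dI.
Qed.

Lemma ie_subset_of_divisors :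
  (forall x, x \in s1 -> exists2 y, y \in s2 & y %| x) ->
  (forall y, y \in s2 -> exists2 z, z \in s1 & z %| y) ->
  {subset s1 <= s2}.
Proof.
move=> div12 div21 x xs1.
have [y ys2 yx] := div12 x xs1; have [z zs1 zy] := div21 y ys2.
have zx : z = x := ie_dvdn_mem_eq adm1 zs1 xs1 (dvdn_trans zy yx).
suff -> : x = y by [].
by apply/eqP; rewrite eqn_dvd yx -zx zy.
Qed.

End TwoSets.

Theorem theorem6p2 (s1 s2 : seq nat) :
  ie_admissible s1 -> ie_admissible s2 ->
  Qrho s1 = Qrho s2 -> s1 =i s2.
Proof.
move=> adm1 adm2 eQ.
have cover12 := ie_exp_cover adm1 adm2 eQ.
have cover21 := ie_exp_cover adm2 adm1 (esym eQ).
have n0_eq : ie_n0 s1 = ie_n0 s2 by apply/anti_leq; rewrite !ie_n0_le.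
have div12 := ie_mem_has_divisor adm1 adm2 n0_eq cover12.
have div21 := ie_mem_has_divisor adm2 adm1 (esym n0_eq) cover21.
move=> x; apply/idP/idP.
- exact: ie_subset_of_divisors adm1 div12 div21 x.
- exact: ie_subset_of_divisors adm2 div21 div12 x.
Qed.
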